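(* Let $n\ge 0$ and let $H^n$ be the graded ring defined below. The only invertible elements of degree $0$ in the center of $H^n$ are $1$ and $-1$; that is, the group of units of the degree $0$ part $Z_0(H^n)$ of the center of $H^n$ is $\{\pm 1\}$.
   Context: Let $\mathcal{A}=\mathbb{Z}[X]/(X^2)$, graded by $\deg 1=-1$, $\deg X=1$; it is a commutative Frobenius algebra with counit $\epsilon(1)=0,\ \epsilon(X)=1$ and comultiplication $\Delta(1)=1\otimes X+X\otimes 1$, $\Delta(X)=X\otimes X$. Let $F$ be the associated $(1+1)$-dimensional TQFT: it assigns $\mathcal{A}^{\otimes k}$ to a disjoint union of $k$ planar circles, and to cobordisms the maps built from multiplication (merging two circles), $\Delta$ (splitting), the unit (birth) and $\epsilon$ (death). For a graded abelian group $M$, $M\{i\}$ denotes the shifted group with $M\{i\}_j=M_{j-i}$. A crossingless matching of $2n$ points is a collection of $n$ disjoint arcs in the lower half-plane (a flat tangle with no bottom endpoints and $2n$ top endpoints); let $B^n$ be the set of these. For a flat tangle $a$, $W(a)$ denotes its reflection in a horizontal line; for $a,b\in B^n$, $W(b)a$ ($W(b)$ placed on top of $a$) is a disjoint union of circles. Define $H^n=\bigoplus_{a,b\in B^n}{}_b(H^n)_a$ with ${}_b(H^n)_a=F(W(b)a)\{n\}$. Multiplication ${}_c(H^n)_b\otimes{}_d(H^n)_a\to H^n$ is zero if $b\neq d$, and for $b=d$ is the map $F(W(c)b)\otimes F(W(b)a)\to F(W(c)a)$ induced by the minimal saddle cobordism from $W(c)b\,W(b)a$ to $W(c)a$ which contracts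 the arcs of $b$ against their mirror images in $W(b)$. This makes $H^n$ an associative unital graded ring (nonnegatively graded), with unit $\sum_a e_a$, where $e_a=1\otimes\cdots\otimes 1\in{}_a(H^n)_a$. *)

(* Khovanov's arc ring H^n, built concretely as a free
   abelian group on its standard basis, with multiplication given by the
   TQFT F applied to the minimal saddle cobordism. *)
From mathcomp Require Import all_boot all_order all_algebra.
Set Implicit Arguments. Unset Strict Implicit. Unset Printing Implicit Defensive.
Import GRing.Theory.
Local Open Scope int_scope.
Local Open Scope nat_scope.

(* Crossingless matchings of 2n points: fixed-point free involutions of
   {0,..,2n-1} without crossing arcs (arcs lie in the lower half-plane). *)
Definition is_cm (n : nat) (f : {ffun 'I_(n.*2) -> 'I_(n.*2)}) : bool :=
  [forall i : 'I_(n.*2), (f (f i) == i) && (f i != i)] &&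
  [forall i : 'I_(n.*2), forall j : 'I_(n.*2), ~~ [&& (i < j)%N, (j < f i)%N & (f i < f j)%N]].

Definition cmatch (n : nat) := {f : {ffun 'I_(n.*2) -> 'I_(n.*2)} | is_cm f}.

(* Adjacency on the 2n points of the closed diagram W(b)a: an arc of a or
   an arc of b.  Connected components = circles of W(b)a. *)
Definition circ_rel n (b a : cmatch n) : rel 'I_(n.*2) :=
  fun x y => (y == val a x) || (y == val b x).

(* A basis element of F(W(b)a) = A^{(x) #circles}: a choice of 1 (false) or
   X (true) for every circle, encoded as a labelling of the points which is
   constant along arcs of a and of b. *)
Definition valid_label n (b a : cmatch n) (l : {ffun 'I_(n.*2) -> bool}) :=
  [forall i, (l (val a i) == l i) && (l (val b i) == l i)].

(* Basis of H^n: triples (b, a, l) spanning _b(H^n)_a. *)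
Definition Hkey (n : nat) :=
  {k : cmatch n * cmatch n * {ffun 'I_(n.*2) -> bool} | valid_label k.1.1 k.1.2 k.2}.

Definition H (n : nat) := {ffun Hkey n -> int}.

(* Degree of a basis element of _b(H^n)_a = F(W(b)a){n}:
   (#circles labelled X) - (#circles labelled 1) + n. *)
Definition Hdeg n (k : Hkey n) : int :=
  let: (b, a, l) := val k in
  ((n_comp (circ_rel b a) [pred x | l x])%:Z
   - (n_comp (circ_rel b a) [pred x | ~~ l x])%:Z + n%:Z)%R.

(* A diagram on a finite vertex set
   V is given by two fixed-point-free involutions P, Q (each vertex lies on
   one P-arc and one Q-arc); its circles are the connected components.
   F(diagram) is free on labellings of vertices constant on circles. *)
Section Saddle.
Variable V : finType.

Definition srel (P Q : V -> V) : rel V := fun x y => (y == P x) || (y == Q x).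

Definition Vec := {ffun {ffun V -> bool} -> int}.

Definition delta (l : {ffun V -> bool}) : Vec := [ffun l' => ((l' == l) : nat)%:Z].

(* Saddle replacing the Q-arcs {p, Q p} and {p', Q p'} by {p, p'} and
   {Q p, Q p'}. *)
Definition swapQ (Q : V -> V) (p p' : V) : V -> V := fun x =>
  if x == p then p' else if x == p' then p
  else if x == Q p then Q p' else if x == Q p' then Q p else Q x.

(* The map F(saddle) on a basis element: multiplication m if the saddle
   merges two circles, comultiplication Delta if it splits one. *)
Definition saddle_basis (P Q : V -> V) (p p' : V) (l : {ffun V -> bool}) : Vec :=
  let cn := connect (srel P (swapQ Q p p')) in
  if connect (srel P Q) p p' then
    (* split: C -> C1 (through p, p') and C2 (through Q p, Q p') *)
    if l p then delta l  (* Delta(X) = X (x) X *)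
    else (* Delta(1) = 1 (x) X + X (x) 1 *)
      (delta [ffun x => if cn (Q p) x then true else l x]
       + delta [ffun x => if cn p x then true else l x])%R
  else
    (* merge of the circles through p and p' : 1.1=1, 1.X=X.1=X, X.X=0 *)
    if l p && l p' then 0%R
    else delta [ffun x => if cn p x then l p || l p' else l x].

Definition saddle_vec (P Q : V -> V) (p p' : V) (v : Vec) : Vec :=
  (\sum_(l : {ffun V -> bool}) saddle_basis P Q p p' l *~ v l)%R.
End Saddle.

(* The stacked diagram W(c)b W(b)a, on vertices (i, true) (between W(c) and
   b) and (i, false) (between W(b) and a). *)
Definition Vst n := ('I_(n.*2) * bool)%type.

Definition Pst n (c a : cmatch n) : Vst n -> Vst n :=
  fun x => if x.2 then (val c x.1, true) else (val a x.1, false).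

Definition Qst n (b : cmatch n) : Vst n -> Vst n := fun x => (val b x.1, x.2).

(* Perform the minimal saddle cobordism: one saddle for each arc {i, b i}
   (i < b i) of b, contracting it against its mirror image in W(b). *)
Definition cobordism_map n (c b a : cmatch n) (v : Vec (Vst n)) : Vec (Vst n) :=
  (foldl (fun st (i : 'I_(n.*2)) =>
     if (i < val b i)%N then
       (swapQ st.1 (i, true) (i, false),
        saddle_vec (Pst c a) st.1 (i, true) (i, false) st.2)
     else st) (Qst b, v) (enum 'I_(n.*2))).2.

Definition mulkey n (k1 k2 : Hkey n) : H n :=
  let: (c, b, s) := val k1 in
  let: (d, a, t) := val k2 in
  if b == d then
    let vf := cobordism_map c b a
                (delta [ffun x : Vst n => if x.2 then s x.1 else t x.1]) in
    [ffun k : Hkey n =>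
       if ((val k).1.1 == c) && ((val k).1.2 == a)
       then vf [ffun x : Vst n => (val k).2 x.1] else 0%R]
  else 0%R.

Definition Hmul n (x y : H n) : H n :=
  (\sum_(k1 : Hkey n) \sum_(k2 : Hkey n) mulkey k1 k2 *~ (x k1 * y k2))%R.

(* 1 = sum_a e_a, e_a = 1 (x) ... (x) 1 in _a(H^n)_a. *)
Definition Hone n : H n :=
  [ffun k : Hkey n =>
     (((val k).1.1 == (val k).1.2) && [forall i, ~~ (val k).2 i] : nat)%:Z].

Definition homog0 n (z : H n) : Prop := forall k, z k != 0%R -> Hdeg k = 0%R.
Definition central n (z : H n) : Prop := forall y : H n, Hmul z y = Hmul y z.
Definition in_Z0 n (z : H n) : Prop := homog0 z /\ central z.
Definition unit_Z0 n (z : H n) : Prop :=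
  in_Z0 z /\ exists w : H n, in_Z0 w /\ Hmul z w = Hone n /\ Hmul w z = Hone n.

(* W(b)a has at most n circles, since the roots of the
   circles and their partners under a are 2 #circles distinct points, and it has
   exactly n only if b = a.  So the degree-0 part of H^n is spanned by the
   idempotents e_a.  Multiplying by e_c on either side only merges circles
   labelled 1 into the other factor, so it is the identity on the summands with
   c on that side and zero on the others.  Hence z = \sum_a lam_a e_a acts on
   _b(H^n)_a by lam_b on the left and by lam_a on the right: z is central iff
   lam is constant, and then z is a unit iff lam = +-1. *)

From mathcomp Require Import all_boot all_order all_algebra zify.
From Stdlib Require Import FunctionalExtensionality.
Set Implicit Arguments. Unset Strict Implicit. Unset Printing Implicit Defensive.
Import GRing.Theory.
Local Notation root := fingraph.root.
Local Notation roots := fingraph.roots.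

Lemma connect_eq_fun (T : finType) (U : eqType) (e : rel T) (f : T -> U) :
  (forall x y, e x y -> f x = f y) -> forall x y, connect e x y -> f x = f y.
Proof.
move=> ef x y exy.
have cl : closed e [pred z | f z == f x] by move=> u v /ef; rewrite !inE => ->.
by have := closed_connect cl exy; rewrite !inE eqxx => /esym/eqP.
Qed.

Section RootsOfInvolution.
Variables (T : finType) (e : rel T) (f : T -> T).
Hypotheses (sym_e : connect_sym e) (fK : involutive f) (f_neq : forall x, f x != x).
Hypothesis e_f : forall x, e x (f x).

Lemma card_roots_or_image :
  #|[pred x | (root e x == x) || (root e x == f x)]| = (#|roots e|).*2.
Proof.
set R := [set x | roots e x].
have fR x : (x \in f @: R) = (f x \in R).
  by rewrite -{1}[x]fK mem_imset //; exact: inv_inj.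
have root_f x : root e (f x) = root e x.
  by apply/esym/(fingraph.rootP sym_e)/connect1.
have RfR : [pred x | (root e x == x) || (root e x == f x)] =i R :|: f @: R.
  by move=> x; rewrite !inE fR inE /roots root_f.
rewrite (eq_card RfR) cardsU (card_imset _ (inv_inj fK)) -addnn.
suff -> : R :&: f @: R = set0 by rewrite cards0 subn0 cardsE.
apply/setP => x; rewrite !inE fR inE /roots root_f.
by apply/negP => /andP[/eqP-> /eqP fx]; have := f_neq x; rewrite -fx eqxx.
Qed.
End RootsOfInvolution.

Section Circles.
Variable n : nat.
Implicit Types a b : cmatch n.

Lemma cmatchK a : involutive (val a).
Proof. by move=> i; have /andP[/forallP/(_ i)/andP[/eqP -> _] _] := valP a. Qed.

Lemma cmatch_neq a i : val a i != i.
Proof. by have /andP[/forallP/(_ i)/andP[_ ->] _] := valP a. Qed.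

Lemma circ_rel_sym b a : connect_sym (circ_rel b a).
Proof.
apply: sym_connect_sym => x y; rewrite /circ_rel.
by rewrite !(eq_sym y) !(inv_eq (cmatchK _)).
Qed.

Lemma card_circles_double b a :
  #|[pred x | (root (circ_rel b a) x == x) || (root (circ_rel b a) x == val a x)]|
  = (#|roots (circ_rel b a)|).*2.
Proof.
apply: card_roots_or_image (circ_rel_sym b a) (cmatchK a) (cmatch_neq a) _.
by move=> x; rewrite /circ_rel eqxx.
Qed.

Lemma card_circles_le b a : #|roots (circ_rel b a)| <= n.
Proof.
by rewrite -leq_double -card_circles_double (leq_trans (max_card _)) ?card_ord.
Qed.

Lemma card_circles_eq b a : #|roots (circ_rel b a)| = n -> b = a.
Proof.
set r := root (circ_rel b a) => card_n.
have cover x : (r x == x) || (r x == val a x).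
  have /subset_cardP full : #|[pred x | (r x == x) || (r x == val a x)]| = #|'I_(n.*2)|.
    by rewrite card_circles_double card_n card_ord.
  by have := full (subset_predT _) x; rewrite !inE.
have rb x : r (val b x) = r x.
  by apply/esym/(fingraph.rootP (circ_rel_sym b a))/connect1; rewrite /circ_rel eqxx orbT.
apply: val_inj; apply/ffunP => x; apply/eqP.
have := cover (val b x); rewrite rb.
case/orP: (cover x) => /eqP-> /orP[] /eqP.
- by move=> bx; have := cmatch_neq b x; rewrite -bx eqxx.
- by move/(congr1 (val a)); rewrite cmatchK => ->.
- by move->.
- by move/(inv_inj (cmatchK a)) => bx; have := cmatch_neq b x; rewrite -bx eqxx.
Qed.

Lemma card_circles_diag a : #|roots (circ_rel a a)| = n.
Proof.
set r := root (circ_rel a a).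
suff cover x : (r x == x) || (r x == val a x).
  apply/double_inj; rewrite -card_circles_double -[RHS]card_ord.
  by apply: eq_card => x; rewrite !inE cover.
have closed_arc : closed (circ_rel a a) (pred2 x (val a x)).
  move=> u v; rewrite /circ_rel orbb => /eqP ->.
  by rewrite !inE (inv_eq (cmatchK a)) (inj_eq (inv_inj (cmatchK a))) orbC.
by have := closed_connect closed_arc (connect_root _ x); rewrite !inE eqxx => <-.
Qed.

End Circles.

Lemma n_comp_predC (T : finType) (e : rel T) (l : pred T) :
  n_comp e [pred x | l x] + n_comp e [pred x | ~~ l x] = #|roots e|.
Proof.
rewrite (@eq_n_comp_r _ _ [pred x | ~~ l x] [predC [pred x | l x]]) // -n_compC.
by apply: eq_card => x; rewrite !inE andbT.
Qed.

Section Degree.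
Variable n : nat.
Implicit Types a b : cmatch n.

Lemma valid_label_false b a : valid_label b a [ffun=> false].
Proof. by apply/forallP => i; rewrite !ffunE. Qed.

Definition key1 b a : Hkey n := exist _ (b, a, [ffun=> false]) (valid_label_false b a).

Definition ekey a := key1 a a.

Lemma valid_labelP b a l : valid_label b a l ->
  (forall i, l (val a i) = l i) /\ (forall i, l (val b i) = l i).
Proof. by move=> /forallP lv; split=> i; case/andP: (lv i) => /eqP ? /eqP. Qed.

Lemma valid_label_connect b a l : valid_label b a l ->
  forall x y, connect (circ_rel b a) x y -> l x = l y.
Proof.
move=> /valid_labelP[la lb].
by apply: connect_eq_fun => x y /orP[] /eqP ->; rewrite ?la ?lb.
Qed.

Lemma Hdeg_ekey a : Hdeg (ekey a) = 0%R.
Proof.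
rewrite /Hdeg /=; have := n_comp_predC (circ_rel a a) [ffun=> false].
rewrite card_circles_diag.
have -> : n_comp (circ_rel a a) [pred x | [ffun=> false] x] = 0.
  by apply: eq_card0 => x; rewrite !inE ffunE andbF.
by rewrite add0n => ->; lia.
Qed.

Lemma Hdeg_eq0 (k : Hkey n) : Hdeg k = 0%R <-> k = ekey (val k).1.1.
Proof.
split=> [|ek]; last by rewrite ek Hdeg_ekey.
case: k => [[[b a] l] lv]; rewrite /Hdeg /=.
have := n_comp_predC (circ_rel b a) l; have := card_circles_le b a.
set X := n_comp _ [pred x | l x]; set O := n_comp _ [pred x | ~~ l x].
move=> le_n sum_XO deg0; have X0 : X = 0 by lia.
have ba : b = a by apply: card_circles_eq; lia.
subst a; have l0 : l = [ffun=> false].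
  apply/ffunP => x; rewrite ffunE; apply/negbTE/negP => lx.
  have lr := valid_label_connect lv (connect_root _ x).
  have := card0_eq X0 (root (circ_rel b b) x).
  by rewrite !inE (roots_root (circ_rel_sym b b)) -lr lx.
by subst l; apply: val_inj.
Qed.

End Degree.

Section SaddleFacts.
Variable V : finType.
Implicit Types (P Q : V -> V) (p q : V).

Lemma saddle_vec_delta P Q p q L :
  saddle_vec P Q p q (delta L) = saddle_basis P Q p q L.
Proof.
rewrite /saddle_vec (bigD1 L) //= big1 ?addr0; first by rewrite ffunE eqxx mulr1z.
by move=> l nl; rewrite ffunE (negbTE nl) mulr0z.
Qed.

Lemma srel_sym P Q : involutive P -> involutive Q -> connect_sym (srel P Q).
Proof.
move=> PK QK; apply: sym_connect_sym => x y; rewrite /srel.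
by rewrite !(eq_sym y) (inv_eq PK) (inv_eq QK).
Qed.

End SaddleFacts.

Lemma PstK n (c a : cmatch n) : involutive (Pst c a).
Proof. by case=> j [] /=; rewrite /Pst /= cmatchK. Qed.

Section UnitLayer.
Variables (n : nat) (c a b : cmatch n) (tau : bool) (t : {ffun 'I_(n.*2) -> bool}).
Hypothesis layer_tau : forall i, (if tau then val c i else val a i) = val b i.
Hypotheses (t_c : forall i, t (val c i) = t i) (t_a : forall i, t (val a i) = t i).
Hypothesis t_b : forall i, t (val b i) = t i.

Local Notation P := (Pst c a).

(* Layer tau of the stacked diagram W(c)b W(b)a is W(b)b, all of its circles
   labelled 1.  After the saddles at the arcs {j, b j} of b with min(j, b j) < k
   have been performed, the diagram has arcs [Qk k] and label [Lk k]: each saddle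
   merged the circle {(j, tau), (b j, tau)} into the circle through (j, ~~ tau),
   whose label t j it keeps. *)

Definition processed k (j : 'I_(n.*2)) := (j < k) || (val b j < k).

Definition Qk k (x : Vst n) : Vst n :=
  if processed k x.1 then (x.1, ~~ x.2) else (val b x.1, x.2).

Definition Lk k : {ffun Vst n -> bool} :=
  [ffun x => if (x.2 == tau) && ~~ processed k x.1 then false else t x.1].

Local Notation fresh k := [pred x : Vst n | (x.2 == tau) && ~~ processed k x.1].

Lemma processed_b k j : processed k (val b j) = processed k j.
Proof. by rewrite /processed cmatchK orbC. Qed.

Lemma processedS k j :
  processed k.+1 j = [|| processed k j, val j == k | val (val b j) == k].
Proof.
rewrite /processed !ltnS.
by case: (ltngtP j k); case: (ltngtP (val b j) k); rewrite ?orbT ?orbF.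
Qed.

Lemma QkK k : involutive (Qk k).
Proof.
case=> j s; rewrite /Qk /=.
by case D: (processed k j) => /=; rewrite ?D ?negbK // processed_b D cmatchK.
Qed.

Lemma P_layer_tau x : x.2 = tau -> P x = (val b x.1, tau).
Proof. by case: x => j s /= ->; move: (layer_tau j); rewrite /Pst; case: tau => /= ->. Qed.

Lemma t_connect k x y : connect (srel P (Qk k)) x y -> t x.1 = t y.1.
Proof.
apply: (connect_eq_fun (f := fun x : Vst n => t x.1)) => {x y} -[j s] y.
rewrite /srel /Pst /Qk => /orP[] /eqP -> /=; first by case: s; rewrite ?t_c ?t_a.
by case: (processed k j); rewrite ?t_b.
Qed.

Lemma fresh_closed k : closed (srel P (Qk k)) (fresh k).
Proof.
apply: intro_closed; first exact: srel_sym (@PstK _ c a) (@QkK k).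
move=> x y /orP[] /eqP ->; rewrite !inE => /andP[/eqP x2 fx].
  by rewrite P_layer_tau //= eqxx processed_b.
by rewrite /Qk (negbTE fx) /= x2 eqxx processed_b.
Qed.

Section Step.
Variables (k : nat) (i : 'I_(n.*2)).
Hypotheses (i_k : val i = k) (i_lt : i < val b i).

Lemma unprocessed_i : processed k i = false.
Proof. by rewrite /processed -i_k ltnn (leq_gtF (ltnW i_lt)). Qed.

Lemma processedS_i : processed k.+1 i.
Proof. by rewrite processedS i_k eqxx orbT. Qed.

Lemma processedS_other j : j != i -> j != val b i -> processed k.+1 j = processed k j.
Proof.
move=> ji jbi; rewrite processedS -i_k !(inj_eq val_inj) (negbTE ji) /=.
by rewrite (inv_eq (cmatchK b)) (negbTE jbi) orbF.
Qed.

Lemma swapQ_Qk : swapQ (Qk k) (i, true) (i, false) = Qk k.+1.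
Proof.
apply: functional_extensionality => -[j s].
rewrite /swapQ /Qk /= unprocessed_i !xpair_eqE.
have [-> | ji] := eqVneq j i; first by case: s; rewrite /= ?processedS_i.
have [-> | jbi] := eqVneq j (val b i).
  by case: s; rewrite /= processed_b processedS_i.
by rewrite /= processedS_other.
Qed.

Lemma split_fresh : ~~ connect (srel P (Qk k)) (i, true) (i, false).
Proof.
apply/negP => /(closed_connect (fresh_closed (k := k))).
by rewrite !inE /= unprocessed_i; case: tau.
Qed.

Lemma merged_labels :
  [ffun x => if connect (srel P (Qk k.+1)) (i, true) x then t i else Lk k x] = Lk k.+1.
Proof.
apply/ffunP => x; rewrite !ffunE.
have [conn | nconn] := boolP (connect _ (i, true) x).
  have := closed_connect (fresh_closed (k := k.+1)) conn.
  by rewrite !inE /= processedS_i andbF (t_connect conn) => /esym/negbT/negbTE ->.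
have conn_i : connect (srel P (Qk k.+1)) (i, true) (i, tau).
  case: tau; first exact: connect0.
  by apply: connect1; rewrite /srel /Qk /= processedS_i eqxx orbT.
have conn_bi : connect (srel P (Qk k.+1)) (i, true) (val b i, tau).
  by apply: connect_trans conn_i (connect1 _); rewrite /srel P_layer_tau ?eqxx.
have [x2 | ] := eqVneq x.2 tau; rewrite ?x2 ?eqxx //=.
case: x nconn x2 => j s nconn /= s_tau; subst s; rewrite processedS_other //.
  by apply: contraNneq nconn => ->.
by apply: contraNneq nconn => ->.
Qed.

Lemma saddle_step :
  saddle_vec P (Qk k) (i, true) (i, false) (delta (Lk k)) = delta (Lk k.+1).
Proof.
rewrite saddle_vec_delta /saddle_basis swapQ_Qk (negbTE split_fresh).
have merge_1 : Lk k (i, true) && Lk k (i, false) = false.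
  by rewrite !ffunE /= unprocessed_i; case: tau; rewrite ?andbF.
have merge_t : Lk k (i, true) || Lk k (i, false) = t i.
  by rewrite !ffunE /= unprocessed_i; case: tau; rewrite ?orbF.
by rewrite merge_1 merge_t merged_labels.
Qed.

End Step.

Lemma processed_skip k (i : 'I_(n.*2)) :
  val i = k -> ~~ (i < val b i) -> processed k.+1 =1 processed k.
Proof.
move=> <- i_ge j; have pi : processed i i.
  by rewrite /processed ltnn ltn_neqAle (inj_eq val_inj) cmatch_neq leqNgt.
rewrite processedS !(inj_eq val_inj) (inv_eq (cmatchK b)).
have [-> | _] := eqVneq j i; first by rewrite pi.
have [-> | _] := eqVneq j (val b i); first by rewrite processed_b pi.
by rewrite !orbF.
Qed.

Local Notation cobordism_step := (fun st (i : 'I_(n.*2)) =>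
  if (i < val b i)%N then
    (swapQ st.1 (i, true) (i, false), saddle_vec P st.1 (i, true) (i, false) st.2)
  else st).

Lemma cobordism_prefix k : k <= n.*2 ->
  foldl cobordism_step (Qst b, delta (Lk 0)) (take k (enum 'I_(n.*2)))
  = (Qk k, delta (Lk k)).
Proof.
elim: k => [_ | k IHk k_lt]; first by rewrite take0.
rewrite (take_nth (Ordinal k_lt)) ?size_enum_ord // foldl_rcons IHk ?(ltnW k_lt) //.
have -> : nth (Ordinal k_lt) (enum 'I_(n.*2)) k = Ordinal k_lt.
  by apply: val_inj; rewrite /= nth_enum_ord.
case: ifP => [i_lt | /negbT i_ge] /=.
  by rewrite saddle_step ?swapQ_Qk.
have skip := processed_skip (erefl : val (Ordinal k_lt) = k) i_ge.
congr pair; first by apply: functional_extensionality => x; rewrite /Qk skip.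
by congr delta; apply/ffunP => x; rewrite !ffunE skip.
Qed.

Lemma cobordism_unit_layer :
  cobordism_map c b a (delta (Lk 0)) = delta [ffun x : Vst n => t x.1].
Proof.
rewrite /cobordism_map -(take_size (enum 'I_(n.*2))) size_enum_ord.
rewrite cobordism_prefix //=; congr delta; apply/ffunP => x.
by rewrite !ffunE /processed ltn_ord andbF.
Qed.

End UnitLayer.

Section IdempotentAction.
Variable n : nat.
Implicit Types (a c : cmatch n) (k : Hkey n).
Local Open Scope ring_scope.

Definition bvec k : H n := [ffun k' => ((k' == k) : nat)%:Z].

Lemma Hkey_eq k c a t (v : valid_label c a t) :
  (k == exist _ (c, a, t) v) = [&& (val k).1.1 == c, (val k).1.2 == a & (val k).2 == t].
Proof. by rewrite -val_eqE; case: (val k) => [[c' a'] t']; rewrite /= !xpair_eqE andbA. Qed.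

Lemma lift_label_inj (t t' : {ffun 'I_(n.*2) -> bool}) :
  ([ffun x : Vst n => t' x.1] == [ffun x : Vst n => t x.1]) = (t' == t).
Proof.
apply/eqP/eqP => [|-> //] /ffunP tt'; apply/ffunP => j.
by have := tt' (j, true); rewrite !ffunE.
Qed.

Lemma mulkey_ekeyl c k : mulkey (ekey c) k = if c == (val k).1.1 then bvec k else 0.
Proof.
case: k => [[[d a] t] v] /=; rewrite /mulkey /=.
have [cd | //] := eqVneq c d; subst d.
have [t_a t_c] := valid_labelP v.
rewrite (_ : [ffun x => _] = @Lk n c true t 0); last first.
  by apply/ffunP => -[j []]; rewrite !ffunE.
rewrite (@cobordism_unit_layer n c a c true t) //.
apply/ffunP => k; rewrite !ffunE Hkey_eq.
case: ifP => /= cond; last by rewrite andbA cond.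
by rewrite lift_label_inj; case/andP: cond => -> ->.
Qed.

Lemma mulkey_ekeyr d k : mulkey k (ekey d) = if (val k).1.2 == d then bvec k else 0.
Proof.
case: k => [[[c b] s] v] /=; rewrite /mulkey /=.
have [bd | //] := eqVneq b d; subst b.
have [s_d s_c] := valid_labelP v.
rewrite (_ : [ffun x => _] = @Lk n d false s 0); last first.
  by apply/ffunP => -[j []]; rewrite !ffunE.
rewrite (@cobordism_unit_layer n c d d false s) //.
apply/ffunP => k; rewrite !ffunE Hkey_eq.
case: ifP => /= cond; last by rewrite andbA cond.
by rewrite lift_label_inj; case/andP: cond => -> ->.
Qed.

(* [idem_comb lam] is \sum_a lam a e_a. *)
Definition idem_comb (lam : cmatch n -> int) : H n :=
  [ffun k => if k == ekey (val k).1.1 then lam (val k).1.1 else 0].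

Lemma HmulE x y k : Hmul x y k = \sum_k1 \sum_k2 mulkey k1 k2 k * (x k1 * y k2).
Proof.
rewrite /Hmul sum_ffunE; apply: eq_bigr => k1 _; rewrite sum_ffunE.
by apply: eq_bigr => k2 _; rewrite ffunMzE mulrzz.
Qed.

Lemma Hmul_idem_combl lam y : Hmul (idem_comb lam) y = [ffun k => lam (val k).1.1 * y k].
Proof.
apply/ffunP => k; rewrite HmulE ffunE (bigD1 (ekey (val k).1.1)) //=.
rewrite [X in _ + X]big1 ?addr0; last first.
  move=> k1 k1k; apply: big1 => k2 _; rewrite ffunE.
  have [k1e | _] := eqVneq k1 (ekey (val k1).1.1); last by rewrite mul0r mulr0.
  rewrite k1e mulkey_ekeyl; case: eqP => [c_k2 | _]; last by rewrite ffunE mul0r.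
  rewrite !ffunE; case: eqP => [kk2 | _]; last by rewrite mul0r.
  by move: k1k; rewrite k1e c_k2 -kk2 eqxx.
rewrite (bigD1 k) //= [X in _ + X]big1 ?addr0.
  by rewrite mulkey_ekeyl eqxx !ffunE !eqxx mul1r.
move=> k2 k2k; rewrite mulkey_ekeyl; case: ifP => _; last by rewrite ffunE mul0r.
by rewrite !ffunE eq_sym (negbTE k2k) mul0r.
Qed.

Lemma Hmul_idem_combr lam y : Hmul y (idem_comb lam) = [ffun k => y k * lam (val k).1.2].
Proof.
apply/ffunP => k; rewrite HmulE ffunE (bigD1 k) //=.
rewrite [X in _ + X]big1 ?addr0; last first.
  move=> k1 k1k; apply: big1 => k2 _; rewrite ffunE.
  have [k2e | _] := eqVneq k2 (ekey (val k2).1.1); last by rewrite mulr0 mulr0.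
  rewrite k2e mulkey_ekeyr; case: ifP => _; last by rewrite ffunE mul0r.
  by rewrite ffunE eq_sym (negbTE k1k) mul0r.
rewrite (bigD1 (ekey (val k).1.2)) //= [X in _ + X]big1 ?addr0.
  by rewrite mulkey_ekeyr eqxx !ffunE !eqxx mul1r.
move=> k2 k2k; rewrite ffunE.
have [k2e | _] := eqVneq k2 (ekey (val k2).1.1); last by rewrite mulr0 mulr0.
rewrite k2e mulkey_ekeyr; case: eqP => [d_k | _]; last by rewrite ffunE mul0r.
by move: k2k; rewrite k2e -d_k eqxx.
Qed.

Lemma idem_comb_ekey lam c : idem_comb lam (ekey c) = lam c.
Proof. by rewrite ffunE eqxx. Qed.

Lemma eq_idem_comb lam mu : lam =1 mu -> idem_comb lam = idem_comb mu.
Proof. by move=> lam_mu; apply/ffunP => k; rewrite !ffunE lam_mu. Qed.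

Lemma idem_comb_homog0 lam : homog0 (idem_comb lam).
Proof.
move=> k; rewrite ffunE; case: ifP => [/eqP ke _ | _ /eqP //].
by rewrite ke Hdeg_ekey.
Qed.

Lemma homog0_idem_comb z : homog0 z -> exists lam, z = idem_comb lam.
Proof.
move=> z0; exists (fun c => z (ekey c)); apply/ffunP => k.
rewrite ffunE; case: eqP => [<- // | kne].
by case: (eqVneq (z k) 0) => // /z0 /Hdeg_eq0.
Qed.

Lemma Hone_idem_comb : Hone n = idem_comb (fun _ => 1).
Proof.
apply/ffunP => k; rewrite !ffunE Hkey_eq eqxx eq_sym.
have -> : [forall i, ~~ (val k).2 i] = ((val k).2 == [ffun=> false]).
  apply/forallP/eqP => [l0 | -> i]; last by rewrite ffunE.
  by apply/ffunP => i; rewrite ffunE; apply/negbTE.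
by case: (_ && _).
Qed.

Lemma opp_idem_comb lam : - idem_comb lam = idem_comb (fun c => - lam c).
Proof. by apply/ffunP => k; rewrite !ffunE; case: ifP; rewrite ?oppr0. Qed.

Lemma Hmul_idem_comb lam mu :
  Hmul (idem_comb lam) (idem_comb mu) = idem_comb (fun c => lam c * mu c).
Proof.
by rewrite Hmul_idem_combl; apply/ffunP => k; rewrite !ffunE; case: ifP; rewrite ?mulr0.
Qed.

Lemma central_idem_comb lam : central (idem_comb lam) -> forall b a, lam b = lam a.
Proof.
move=> lam_c b a; have /ffunP/(_ (key1 b a)) := lam_c (bvec (key1 b a)).
by rewrite Hmul_idem_combl Hmul_idem_combr !ffunE eqxx mulr1 mul1r.
Qed.

Lemma idem_comb_const_Z0 x : in_Z0 (idem_comb (fun _ => x)).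
Proof.
split=> [|y]; first exact: idem_comb_homog0.
by rewrite Hmul_idem_combl Hmul_idem_combr; apply/ffunP => k; rewrite !ffunE mulrC.
Qed.

Lemma idem_comb_involution_unit x : x * x = 1 -> unit_Z0 (idem_comb (fun _ => x)).
Proof.
move=> xx; split; first exact: idem_comb_const_Z0.
exists (idem_comb (fun _ => x)); split; first exact: idem_comb_const_Z0.
by rewrite Hmul_idem_comb xx Hone_idem_comb.
Qed.

End IdempotentAction.

Lemma int_mul_eq1 (x y : int) : (x * y = 1 -> x = 1 \/ x = -1)%R.
Proof.
move=> xy; have : x \is a GRing.unit by apply/unitrPr; exists y.
by rewrite qualifE /= => /orP[] /eqP; [left | right].
Qed.

Theorem proposition2 (n : nat) (z : H n) :
  unit_Z0 z <-> (z = Hone n \/ z = (- Hone n)%R).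
Proof.
rewrite Hone_idem_comb opp_idem_comb; split; last first.
  by case=> ->; apply: idem_comb_involution_unit; rewrite ?mulrNN mulr1.
case=> -[/homog0_idem_comb[lam ->] lam_c] [_ [[/homog0_idem_comb[mu ->] _] [lam_mu _]]].
have lam_unit c : (lam c * mu c = 1)%R.
  have := congr1 (fun u : H n => u (ekey c)) lam_mu.
  by rewrite Hmul_idem_comb Hone_idem_comb !idem_comb_ekey.
have lam_const := central_idem_comb lam_c.
have [all1 | /forallPn[c0 /eqP lam_c0]] := boolP [forall c, lam c == 1%R].
  by left; apply: eq_idem_comb => c; apply/eqP/(forallP all1).
right; apply: eq_idem_comb => c; rewrite (lam_const c c0).
by case: (int_mul_eq1 (lam_unit c0)).
Qed.
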